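(* Let $\mathcal{D}$ be a distribution on $\mathbb{R}^d$ with finite second moments, $f:\mathbb{R}^d\to\{0,1\}$ with $\Pr_{\mathcal{D}}[f=a]>0$ for $a\in\{0,1\}$, $q\ge2$, $1\le k\le q-1$, and for $a\in\{0,1\}$ let $\mathbf{X}_a$ denote $\mathbf{X}\sim\mathcal{D}$ conditioned on $f(\mathbf{X})=a$. Then the bag and pair covariance matrices of $\mathrm{Ex}(f,\mathcal{D},q,k)$ satisfy $$\boldsymbol{\Sigma}_D=2\boldsymbol{\Sigma}_B+\frac{2}{q-1}\frac kq\Big(1-\frac kq\Big)(\mathbb{E}[\mathbf{X}_1]-\mathbb{E}[\mathbf{X}_0])(\mathbb{E}[\mathbf{X}_1]-\mathbb{E}[\mathbf{X}_0])^{\mathsf T}.$$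
   Context: The bag oracle $\mathrm{Ex}(f,\mathcal{D},q,k)$ returns a bag of $q$ independent points, $k$ drawn from $\mathcal{D}$ conditioned on $f=1$ and $q-k$ from $\mathcal{D}$ conditioned on $f=0$. $\boldsymbol{\Sigma}_B:=\mathrm{Var}[\mathbf{X}]$ where $\mathbf{X}$ is a uniformly random point of a random bag; $\boldsymbol{\Sigma}_D:=\mathbb{E}[\mathbf{Z}\mathbf{Z}^{\mathsf T}]$ where $\mathbf{Z}=\mathbf{X}'_1-\mathbf{X}'_2$ for a uniformly random pair drawn without replacement from a random bag. *)

From HB Require Import structures.
From mathcomp Require Import all_boot all_order all_algebra.
From mathcomp Require Import all_classical all_reals all_analysis.
Set Implicit Arguments. Unset Strict Implicit. Unset Printing Implicit Defensive.
Import Order.TTheory GRing.Theory Num.Theory.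
Local Open Scope classical_set_scope.
Local Open Scope ring_scope.

(* Points of R^d are represented as d-tuples of reals, equipped with the
   product (= Borel) sigma-algebra provided by MathComp-Analysis. *)

Definition condprob {R : realType} {dT} {T : measurableType dT}
  (D : probability T R) (F A : set T) : \bar R :=
  (fine (D (A `&` F)) / fine (D F))%:E.

Definition mutually_independent {R : realType} {dO} {Om : measurableType dO}
  {dT} {T : measurableType dT} (P : probability Om R) (q : nat)
  (B : 'I_q -> Om -> T) : Prop :=
  forall A : 'I_q -> set T, (forall i, measurable (A i)) ->
    P (\bigcap_(i in [set: 'I_q]) (B i @^-1` A i)) =
    (\big[*%E/1%E]_(i < q) P (B i @^-1` A i))%E.

(* B = (B_0, ..., B_{q-1}) is a draw of Ex(f, D, q, k): q independent points,
   the k first ones distributed as D conditioned on f = 1, the q - k others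
   as D conditioned on f = 0 (the order inside the bag is irrelevant for the
   quantities below, which are symmetric in the points). *)
Definition bag_oracle {R : realType} {dO} {Om : measurableType dO} {d : nat}
  (P : probability Om R) (D : probability (d.-tuple R) R)
  (f : d.-tuple R -> bool) (q k : nat) (B : 'I_q -> Om -> d.-tuple R) : Prop :=
  [/\ forall i, measurable_fun setT (B i),
      mutually_independent P B &
      forall (i : 'I_q) (A : set (d.-tuple R)), measurable A ->
        P (B i @^-1` A) = condprob D [set x | f x = (i < k)%N] A].

Definition cond_mean {R : realType} {d : nat} (D : probability (d.-tuple R) R)
  (f : d.-tuple R -> bool) (a : bool) : 'rV[R]_d :=
  \row_j (fine (\int[D]_(x in [set x | f x = a]) (tnth x j)%:E) /
          fine (D [set x | f x = a])).

Definition bag_mean {R : realType} {dO} {Om : measurableType dO} {d q : nat}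
  (P : probability Om R) (B : 'I_q -> Om -> d.-tuple R) (j : 'I_d) : R :=
  q%:R^-1 * \sum_(t < q) fine ('E_P[fun w => tnth (B t w) j]).

(* Sigma_B := Var[X], X a uniformly random point (index uniform on 'I_q,
   independent of the bag) of a random bag *)
Definition Sigma_B {R : realType} {dO} {Om : measurableType dO} {d q : nat}
  (P : probability Om R) (B : 'I_q -> Om -> d.-tuple R) : 'M[R]_d :=
  \matrix_(j, l) (q%:R^-1 * \sum_(t < q)
     fine ('E_P[fun w => (tnth (B t w) j - bag_mean P B j) *
                         (tnth (B t w) l - bag_mean P B l)])).

(* Sigma_D := E[Z Z^T], Z = X'_1 - X'_2 for a uniformly random ordered pair
   of distinct indices (drawn without replacement, independent of the bag) *)
Definition Sigma_D {R : realType} {dO} {Om : measurableType dO} {d q : nat}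
  (P : probability Om R) (B : 'I_q -> Om -> d.-tuple R) : 'M[R]_d :=
  \matrix_(j, l) ((q * q.-1)%:R^-1 * \sum_(t < q) \sum_(s < q | s != t)
     fine ('E_P[fun w => (tnth (B t w) j - tnth (B s w) j) *
                         (tnth (B t w) l - tnth (B s w) l)])).

Arguments bag_oracle {R dO Om d} P D f q k B.

(* Write X_t for the t-th point of the bag, mu_t = E[X_t] (E[X_1] for the k
   first points, E[X_0] for the others) and M_t = E[X_t X_t^T].  For t <> s,
   independence gives E[(X_t - X_s)(X_t - X_s)^T] = M_t + M_s - mu_t mu_s^T -
   mu_s mu_t^T, while Sigma_B = avg_t M_t - mu mu^T with mu = avg_t mu_t.
   Averaging over ordered pairs of distinct indices yields
   Sigma_D = 2 Sigma_B + 2/(q-1) avg_t (mu_t - mu)(mu_t - mu)^T, and this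
   covariance of a two-valued sequence is k/q (1 - k/q) (E[X_1] - E[X_0])
   (E[X_1] - E[X_0])^T. *)

From HB Require Import structures.
From mathcomp Require Import all_boot all_order all_algebra.
From mathcomp Require Import all_classical all_reals all_analysis.
From mathcomp Require Import measurable_realfun.
From mathcomp Require Import ring lra.
Set Implicit Arguments. Unset Strict Implicit. Unset Printing Implicit Defensive.
Import Order.TTheory GRing.Theory Num.Theory.
Local Open Scope classical_set_scope.
Local Open Scope ring_scope.

Lemma sumr_split_ltn (R : nmodType) (q k : nat) (G : bool -> R) : (k <= q)%N ->
  \sum_(t < q) G (t < k)%N = G true *+ k + G false *+ (q - k).
Proof.
move=> kq; rewrite -(big_mkord xpredT (fun t => G (t < k)%N)).
rewrite (@big_cat_nat _ _ _ k 0 q _ _ (leq0n k) kq) /=.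
rewrite (eq_big_nat _ _ (F2 := fun=> G true)); last by move=> i /andP[_ ->].
rewrite (eq_big_nat _ _ (F2 := fun=> G false) (m := k)); last first.
  by move=> i /andP[ki _]; rewrite ltnNge ki.
by rewrite !sumr_const_nat subn0.
Qed.

Lemma sumr_neq (R : zmodType) (n : nat) (F : 'I_n -> R) (t : 'I_n) :
  \sum_(s < n | s != t) F s = \sum_s F s - F t.
Proof. by rewrite [in RHS](bigD1 t) //= addrAC subrr add0r. Qed.

Definition avg {R : fieldType} {n : nat} (a : 'I_n -> R) := n%:R^-1 * \sum_i a i.

Lemma avg_distinct_pairs (R : numFieldType) (q : nat) (e a b : 'I_q -> R) :
  (2 <= q)%N ->
  (q * q.-1)%:R^-1 * \sum_t \sum_(s | s != t) (e t + e s - a t * b s - a s * b t) =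
  2 * avg (fun t => e t - avg b * a t - avg a * b t + avg a * avg b) +
  2 / (q%:R - 1) * avg (fun t => (a t - avg a) * (b t - avg b)).
Proof.
move=> q2.
have q0 : q%:R != 0 :> R by rewrite pnatr_eq0 -lt0n (leq_trans _ q2).
have q1 : q%:R - 1 != 0 :> R by rewrite subr_eq0 pnatr_eq1 gtn_eqF.
have inner t : \sum_(s | s != t) (e t + e s - a t * b s - a s * b t) =
    (e t *+ q + \sum_i e i - a t * \sum_i b i - (\sum_i a i) * b t)
    - (2 * e t - 2 * (a t * b t)).
  rewrite sumr_neq !sumrB !big_split /= sumr_const card_ord mulr_sumr mulr_suml.
  ring.
set x := avg a; set y := avg b.
have expand i : (a i - x) * (b i - y) = a i * b i - y * a i - x * b i + x * y.
  by ring.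
rewrite /avg (eq_bigr _ (fun t _ => inner t)) (eq_bigr _ (fun i _ => expand i)).
rewrite !(sumrB, big_split) /= -!(mulr_sumr, mulr_suml) !sumr_const !card_ord.
rewrite /x /y /avg natrM -subn1 natrB ?(leq_trans _ q2) // sumrMnl.
move: (\sum_i e i) (\sum_i a i) (\sum_i b i) (\sum_i a i * b i) => Se Sa Sb Sab.
by field; rewrite q0 q1.
Qed.

Lemma avg_two_valued_cov (R : numFieldType) (q k : nat) (A B : bool -> R) :
  (0 < q)%N -> (k <= q)%N ->
  let a (t : 'I_q) := A (t < k)%N in let b (t : 'I_q) := B (t < k)%N in
  avg (fun t => (a t - avg a) * (b t - avg b)) =
  k%:R / q%:R * (1 - k%:R / q%:R) * ((A true - A false) * (B true - B false)).
Proof.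
move=> q0 kq a b; set x := avg a; set y := avg b.
rewrite /avg (sumr_split_ltn (fun c => (A c - x) * (B c - y))) //.
rewrite /x /y /avg !sumr_split_ltn // !mulrnBr //.
by field; rewrite pnatr_eq0 -lt0n.
Qed.

Section expectation_products.
Context d (T : measurableType d) (R : realType) (P : probability T R).

Lemma fine_expectationB (X Y : T -> R) : X \in Lfun P 1 -> Y \in Lfun P 1 ->
  fine 'E_P[X \- Y] = fine 'E_P[X] - fine 'E_P[Y].
Proof. by move=> X1 Y1; rewrite expectationB // fineB // expectation_fin_num. Qed.

Lemma expectation_mulBB (U V W Z : T -> R) :
  U \* W \in Lfun P 1 -> U \* Z \in Lfun P 1 ->
  V \* W \in Lfun P 1 -> V \* Z \in Lfun P 1 ->
  fine 'E_P[(U \- V) \* (W \- Z)] =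
  fine 'E_P[U \* W] - fine 'E_P[U \* Z] - fine 'E_P[V \* W] + fine 'E_P[V \* Z].
Proof.
move=> UW UZ VW VZ.
have -> : (U \- V) \* (W \- Z) = (U \* W \- U \* Z) \- (V \* W \- V \* Z).
  by apply/funext => w /=; ring.
by rewrite !fine_expectationB ?rpredB //; ring.
Qed.

Lemma expectation_mul_centered (U W : T -> R) (a b : R) :
  U \in Lfun P 1 -> W \in Lfun P 1 -> U \* W \in Lfun P 1 ->
  fine 'E_P[fun w => (U w - a) * (W w - b)] =
  fine 'E_P[U \* W] - b * fine 'E_P[U] - a * fine 'E_P[W] + a * b.
Proof.
move=> U1 W1 UW1.
have bU1 : b \o* U \in Lfun P 1 by exact: Lfun_scale.
have aW1 : a \o* W \in Lfun P 1 by exact: Lfun_scale.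
have -> : (fun w => (U w - a) * (W w - b)) = (U \* W \- b \o* U \- a \o* W) \+ cst (a * b).
  by apply/funext => w /=; ring.
rewrite expectationD ?rpredB ?Lfun_cst // fineD ?expectation_fin_num ?rpredB ?Lfun_cst //.
rewrite !fine_expectationB ?rpredB // expectation_cst !expectationZl //.
by rewrite !fineM ?expectation_fin_num.
Qed.

End expectation_products.

Section independent_expectation.
Local Open Scope ereal_scope.
Context dO dT (Om : measurableType dO) (T : measurableType dT) (R : realType).
Variables (P : probability Om R) (X Y : Om -> T) (g h : T -> R).
Hypotheses (mX : measurable_fun setT X) (mY : measurable_fun setT Y).
Hypotheses (mg : measurable_fun setT g) (mh : measurable_fun setT h).
Hypothesis indepXY : forall A B, measurable A -> measurable B ->
  P (X @^-1` A `&` Y @^-1` B) = P (X @^-1` A) * P (Y @^-1` B).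
Hypotheses (gX1 : g \o X \in Lfun P 1) (hY1 : h \o Y \in Lfun P 1).

Let mu := distribution P (HB.pack X (isMeasurableFun.Build _ _ _ _ _ mX)).
Let nu := distribution P (HB.pack Y (isMeasurableFun.Build _ _ _ _ _ mY)).
Let XY w := (X w, Y w).

Let mXY : measurable_fun setT XY.
Proof. exact: measurable_fun_pair. Qed.

Let law_pair A : measurable A -> pushforward P XY A = (mu \x nu) A.
Proof.
by move=> mA; symmetry; apply: product_measure_unique => // B C mB mC; rewrite -indepXY.
Qed.

Let gh (z : T * T) := (g z.1 * h z.2)%:E.

Let mgh : measurable_fun setT gh.
Proof.
apply/measurable_EFinP; apply: measurable_funM.
  exact: measurableT_comp mg measurable_fst.
exact: measurableT_comp mh measurable_snd.
Qed.

Let integrable_g : mu.-integrable setT (EFin \o g).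
Proof. by apply: integrable_pushforward => //; [exact/measurable_EFinP|exact/Lfun1_integrable]. Qed.

Let integrable_h : nu.-integrable setT (EFin \o h).
Proof. by apply: integrable_pushforward => //; [exact/measurable_EFinP|exact/Lfun1_integrable]. Qed.

Let integrable_gh : (mu \x nu).-integrable setT gh.
Proof.
apply/integrable12ltyP => //.
have -> : (fun x => \int[nu]_y `|gh (x, y)|) =
    (fun x => `|g x|%:E * \int[nu]_y `|h y|%:E).
  apply/funext => x; rewrite -ge0_integralZl_EFin //; last first.
    exact/measurable_EFinP/measurableT_comp.
  by apply: eq_integral => y _; rewrite /gh /= normrM EFinM.
rewrite ge0_integralZr //; last 2 first.
- exact/measurable_EFinP/measurableT_comp.
- exact: integral_ge0.
rewrite lte_mul_pinfty // ?integral_ge0 //.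
  by rewrite ge0_fin_numE ?integral_ge0 //; case/integrableP: integrable_g.
by case/integrableP: integrable_h.
Qed.

Lemma independent_Lfun_mul : ((g \o X) \* (h \o Y))%R \in Lfun P 1.
Proof.
apply/Lfun1_integrable/integrableP; split.
  by apply/measurable_EFinP/measurable_funM; exact: measurableT_comp.
have -> : \int[P]_w `|(EFin \o ((g \o X) \* (h \o Y))%R) w| =
    \int[pushforward P XY]_z (abse \o gh) z.
  by rewrite ge0_integral_pushforward //=; exact: measurableT_comp.
rewrite (eq_measure_integral (mu \x nu)) => [|A mA _]; last exact: law_pair.
by case/integrableP: integrable_gh.
Qed.

Lemma independent_expectationM :
  'E_P[(g \o X) \* (h \o Y)] = 'E_P[g \o X] * 'E_P[h \o Y].
Proof.
have -> : 'E_P[(g \o X) \* (h \o Y)] = \int[pushforward P XY]_z gh z.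
  rewrite unlock integral_pushforward //= preimage_setT.
  exact/Lfun1_integrable/independent_Lfun_mul.
rewrite (eq_measure_integral (mu \x nu)) => [|A mA _]; last exact: law_pair.
rewrite -integral12_prod_meas1 //.
have nuE : \int[nu]_y (EFin \o h) y = (fine (\int[nu]_y (EFin \o h) y))%:E.
  by rewrite fineK // integrable_fin_num.
have -> : fubini_F nu gh = (fun x => (g x)%:E * (fine (\int[nu]_y (EFin \o h) y))%:E).
  by apply/funext => x; rewrite -nuE /fubini_F -integralZl.
rewrite integralZr // -nuE unlock.
by rewrite !integral_pushforward //= ?preimage_setT;
  first [exact/measurable_EFinP | exact/Lfun1_integrable].
Qed.

End independent_expectation.

Section conditional_law.
Local Open Scope ereal_scope.
Context dO dT (Om : measurableType dO) (T : measurableType dT) (R : realType).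
Variables (P : probability Om R) (D : probability T R) (F : set T) (X : Om -> T).
Hypotheses (mF : measurable F) (mX : measurable_fun setT X).
Hypothesis lawX : forall A, measurable A -> P (X @^-1` A) = condprob D F A.

Let c0 : (0 <= (fine (D F))^-1)%R.
Proof. by rewrite invr_ge0 fine_ge0. Qed.

Let c : {nonneg R} := NngNum c0.

Let integral_conditional_law (g : T -> \bar R) : measurable_fun setT g ->
  \int[pushforward P X]_y g y = \int[mscale c D]_(y in F) g y.
Proof.
move=> mg; have mCF : measurable (~` F) by exact: measurableC.
rewrite -(setUv F) integral_setU //; last 2 first.
- by rewrite setUv.
- exact/disj_setPCl.
rewrite [X in _ + X]null_set_integral ?adde0 //; last 2 first.
- exact: measurable_funTS.
- change (P (X @^-1` ~` F) = 0).
  by rewrite lawX // /condprob setICl measure0 mul0r.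
apply: eq_measure_integral => A mA AF.
change (P (X @^-1` A) = (c%:num)%:E * D A).
rewrite lawX // /condprob setIidl // -[D A]fineK ?fin_num_measure //.
by rewrite -EFinM mulrC.
Qed.

Lemma conditional_law_Lfun (g : T -> R) : measurable_fun setT g ->
  D.-integrable F (EFin \o g) -> g \o X \in Lfun P 1.
Proof.
move=> mg /integrableP[_ gF]; apply/Lfun1_integrable/integrableP; split.
  exact/measurable_EFinP/measurableT_comp.
have -> : \int[P]_w `|(EFin \o (g \o X)) w| = \int[pushforward P X]_y `|(g y)%:E|.
  by rewrite ge0_integral_pushforward //=; exact/measurable_EFinP/measurableT_comp.
rewrite (@integral_conditional_law (fun y => `|(g y)%:E|)); last first.
  exact/measurableT_comp/measurable_EFinP.
rewrite ge0_integral_mscale //; last exact/measurable_funTS/measurableT_comp/measurable_EFinP.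
exact: lte_mul_pinfty.
Qed.

Lemma conditional_law_expectation (g : T -> R) : measurable_fun setT g ->
  D.-integrable F (EFin \o g) ->
  'E_P[g \o X] = ((fine (D F))^-1 * fine (\int[D]_(x in F) (g x)%:E))%:E.
Proof.
move=> mg gF; rewrite unlock.
have -> : \int[P]_w ((g \o X) w)%:E = \int[pushforward P X]_y (g y)%:E.
  rewrite integral_pushforward //=; first exact/measurable_EFinP.
  by rewrite preimage_setT; exact/Lfun1_integrable/conditional_law_Lfun.
rewrite (@integral_conditional_law (EFin \o g)); last exact/measurable_EFinP.
rewrite integralE !ge0_integral_mscale //; last 2 first.
- exact/measurable_funeneg/measurable_funTS/measurable_EFinP.
- exact/measurable_funepos/measurable_funTS/measurable_EFinP.
have gpos := integrable_pos_fin_num mF gF.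
have gneg := integrable_neg_fin_num mF gF.
have -> : \int[D]_(x in F) (g x)%:E =
    \int[D]_(x in F) (EFin \o g)^\+ x - \int[D]_(x in F) (EFin \o g)^\- x.
  exact: integralE.
by rewrite -(fineK gpos) -(fineK gneg) -EFinB -EFinB /= mulrBr.
Qed.

End conditional_law.

Lemma mutually_independent2 (R : realType) dO (Om : measurableType dO)
    dT (T : measurableType dT) (P : probability Om R) (q : nat)
    (B : 'I_q -> Om -> T) (t s : 'I_q) :
  mutually_independent P B -> t != s ->
  forall A C, measurable A -> measurable C ->
  P (B t @^-1` A `&` B s @^-1` C) = (P (B t @^-1` A) * P (B s @^-1` C))%E.
Proof.
move=> indep ts A C mA mC.
pose E i := if i == t then A else if i == s then C else setT.
have mE i : measurable (E i) by rewrite /E; case: ifP => // _; case: ifP.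
have st : (s == t) = false by apply/negbTE; rewrite eq_sym.
have <- : \bigcap_(i in [set: 'I_q]) (B i @^-1` E i) = B t @^-1` A `&` B s @^-1` C.
  apply/seteqP; split => [w cap|w [At Cs] i _].
    by split; [have := cap t I | have := cap s I]; rewrite /E ?eqxx ?st.
  by rewrite /E; case: eqP => [->//|_]; case: eqP => [->//|_].
rewrite indep // (bigD1 t) //= (bigD1 s) 1?eq_sym //= big1 ?mule1 /E ?eqxx ?st //.
move=> i /andP[/negbTE -> /negbTE ->]; rewrite preimage_setT.
exact: probability_setT.
Qed.

Lemma integrableM_of_sqr d (T : measurableType d) (R : realType)
    (mu : {measure set T -> \bar R}) (u v : T -> R) :
  measurable_fun setT u -> measurable_fun setT v ->
  mu.-integrable setT (EFin \o (fun x => u x ^+ 2)) ->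
  mu.-integrable setT (EFin \o (fun x => v x ^+ 2)) ->
  mu.-integrable setT (EFin \o (u \* v)).
Proof.
move=> mfu mfv u2 v2.
apply: (@le_integrable _ _ _ mu setT measurableT _
  (EFin \o (fun x => u x ^+ 2 + v x ^+ 2))) => //.
- exact/measurable_EFinP/measurable_funM.
- move=> x _ /=; rewrite lee_fin [X in _ <= X]ger0_norm ?addr_ge0 ?sqr_ge0 // normrM.
  rewrite -[u x ^+ 2]real_normK ?num_real // -[v x ^+ 2]real_normK ?num_real //.
  by have := normr_ge0 (u x); have := normr_ge0 (v x); nra.
- have -> : EFin \o (fun x => u x ^+ 2 + v x ^+ 2) =
      ((EFin \o (fun x => (u x ^+ 2)%R)) \+ (EFin \o (fun x => (v x ^+ 2)%R)))%E.
    by apply/funext => x; rewrite /= EFinD.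
  exact: integrableD.
Qed.

Section bag_moments.
Context (R : realType) (d : nat) (D : probability (d.-tuple R) R).
Context (f : d.-tuple R -> bool) (q k : nat).
Context dO (Om : measurableType dO) (P : probability Om R).
Variable B : 'I_q -> Om -> d.-tuple R.
Hypothesis D2 : forall j : 'I_d, (\int[D]_x ((tnth x j) ^+ 2)%:E < +oo)%E.
Hypothesis mf : measurable [set x | f x].
Hypothesis mB : forall t, measurable_fun setT (B t).
Hypothesis indepB : mutually_independent P B.
Hypothesis lawB : forall t A, measurable A ->
  P (B t @^-1` A) = condprob D [set x | f x = (t < k)%N] A.

Let coord (j : 'I_d) (x : d.-tuple R) := tnth x j.

Let mcoord j : measurable_fun setT (coord j).
Proof. exact: measurable_tnth. Qed.

Let mclass (a : bool) : measurable [set x | f x = a].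
Proof.
case: a => //; rewrite (_ : [set x | f x = false] = ~` [set x | f x]).
  exact: measurableC.
by apply/seteqP; split => x /=; case: (f x).
Qed.

Let coord_sqr_integrable j : D.-integrable setT (EFin \o (fun x => coord j x ^+ 2)).
Proof.
apply/integrableP; split; first exact/measurable_EFinP/measurable_funX.
under eq_integral do rewrite /= ger0_norm ?sqr_ge0 //.
exact: D2.
Qed.

Let coordM_integrable j l : D.-integrable setT (EFin \o (coord j \* coord l)).
Proof. exact: integrableM_of_sqr. Qed.

Let coord_integrable j : D.-integrable setT (EFin \o coord j).
Proof.
have cst1 : D.-integrable setT (EFin \o (fun x : d.-tuple R => cst 1 x ^+ 2)).
  under eq_fun do rewrite /= expr1n.
  exact: finite_measure_integrable_cst.
have := integrableM_of_sqr (mcoord j) (measurable_cst _) (coord_sqr_integrable j) cst1.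
by rewrite (_ : coord j \* cst 1 = coord j) //; apply/funext => x; exact: mulr1.
Qed.

Lemma bag_coord_Lfun t j : coord j \o B t \in Lfun P 1.
Proof.
apply: (conditional_law_Lfun _ (mB t) (lawB t)) => //.
exact: integrableS (coord_integrable j).
Qed.

Lemma bag_coordM_Lfun t j l : (coord j \o B t) \* (coord l \o B t) \in Lfun P 1.
Proof.
apply: (conditional_law_Lfun _ (mB t) (lawB t) (g := coord j \* coord l)) => //.
  exact: measurable_funM.
exact: integrableS (coordM_integrable j l).
Qed.

Lemma bag_coord_expectation t j :
  fine 'E_P[coord j \o B t] = cond_mean D f (t < k)%N 0 j.
Proof.
rewrite (conditional_law_expectation _ (mB t) (lawB t)) //=; last first.
  exact: integrableS (coord_integrable j).
by rewrite mxE mulrC.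
Qed.

Lemma bag_cross_Lfun t s j l : t != s ->
  (coord j \o B t) \* (coord l \o B s) \in Lfun P 1.
Proof.
move=> ts; apply: independent_Lfun_mul; rewrite ?bag_coord_Lfun //.
exact: mutually_independent2.
Qed.

Lemma bag_cross_expectation t s j l : t != s ->
  fine 'E_P[(coord j \o B t) \* (coord l \o B s)] =
  cond_mean D f (t < k)%N 0 j * cond_mean D f (s < k)%N 0 l.
Proof.
move=> ts; rewrite independent_expectationM ?bag_coord_Lfun //.
  by rewrite fineM ?expectation_fin_num ?bag_coord_Lfun // !bag_coord_expectation.
exact: mutually_independent2.
Qed.

Let a j (t : 'I_q) := cond_mean D f (t < k)%N 0 j.
Let e j l (t : 'I_q) := fine 'E_P[(coord j \o B t) \* (coord l \o B t)].

Lemma Sigma_D_entry j l : Sigma_D P B j l = (q * q.-1)%:R^-1 *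
  \sum_t \sum_(s | s != t) (e j l t + e j l s - a j t * a l s - a j s * a l t).
Proof.
rewrite mxE; congr (_ * _); apply: eq_bigr => t _; apply: eq_bigr => s st.
have ts : t != s by rewrite eq_sym.
rewrite (@expectation_mulBB _ _ _ _ (coord j \o B t) (coord j \o B s)
  (coord l \o B t) (coord l \o B s)) ?bag_coordM_Lfun ?bag_cross_Lfun //.
by rewrite (bag_cross_expectation j l ts) (bag_cross_expectation j l st) /e /a; ring.
Qed.

Lemma Sigma_B_entry j l : Sigma_B P B j l =
  avg (fun t => e j l t - avg (a l) * a j t - avg (a j) * a l t + avg (a j) * avg (a l)).
Proof.
have mean_a i : bag_mean P B i = avg (a i).
  by congr (_ * _); apply: eq_bigr => t _; rewrite bag_coord_expectation.
rewrite mxE; congr (_ * _); apply: eq_bigr => t _.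
rewrite -!mean_a /a -!bag_coord_expectation.
exact: expectation_mul_centered (bag_coord_Lfun t j) (bag_coord_Lfun t l)
  (bag_coordM_Lfun t j l).
Qed.

Lemma Sigma_D_entry_decomposition j l : (2 <= q)%N -> (k <= q)%N ->
  Sigma_D P B j l = 2 * Sigma_B P B j l +
    2 / (q%:R - 1) * (k%:R / q%:R) * (1 - k%:R / q%:R) *
    ((cond_mean D f true 0 j - cond_mean D f false 0 j) *
     (cond_mean D f true 0 l - cond_mean D f false 0 l)).
Proof.
move=> q2 kq; rewrite Sigma_D_entry Sigma_B_entry avg_distinct_pairs //.
rewrite (avg_two_valued_cov (fun c => cond_mean D f c 0 j)
  (fun c => cond_mean D f c 0 l)) //.
  by rewrite !mulrA.
exact: leq_trans q2.
Qed.

End bag_moments.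

Theorem lemma9 (R : realType) (d : nat) (D : probability (d.-tuple R) R)
  (f : d.-tuple R -> bool) (q k : nat)
  (dO : measure_display) (Om : measurableType dO) (P : probability Om R)
  (B : 'I_q -> Om -> d.-tuple R) :
  (forall j : 'I_d, (\int[D]_x ((tnth x j) ^+ 2)%:E < +oo)%E) ->
  measurable [set x | f x] ->
  (forall a : bool, (0 < D [set x | f x = a])%E) ->
  (2 <= q)%N -> (1 <= k)%N -> (k <= q - 1)%N ->
  bag_oracle P D f q k B ->
  Sigma_D P B =
    2 *: Sigma_B P B +
    (2 / (q%:R - 1) * (k%:R / q%:R) * (1 - k%:R / q%:R)) *:
      ((cond_mean D f true - cond_mean D f false)^T *m
       (cond_mean D f true - cond_mean D f false)).
Proof.
move=> D2 mf _ q2 _ kq [mB indepB lawB]; apply/matrixP => j l.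
have kq' : (k <= q)%N by exact: leq_trans kq (leq_subr 1 q).
rewrite (Sigma_D_entry_decomposition D2 mf mB indepB lawB) //.
by rewrite !mxE big_ord1 !mxE.
Qed.
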